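(* Let $\mathcal{L}:\mathbb{R}^d\to\mathbb{R}$, $\mu>0$, $\theta\in\mathbb{R}^d$, $K\ge1$ an integer, $C>0$, and $p$ a probability vector on $\{1,\dots,L\}$ with all entries positive. Let $z\sim\mathcal{N}(0,I_d)$ and, independently, $(N_1,\dots,N_L)\sim\mathrm{Multinomial}(K,p)$. Define the clipped AdaLeZO estimator blockwise by $$\tilde g^{\mathrm{Ada},(l)}=\min\!\Big(\frac{1}{K p(l)},\,C\Big)\,N_l\,\hat g^{\mathrm{ZO},(l)}(\theta;z).$$ Then $$\mathbb{E}\big[\|\tilde g^{\mathrm{Ada}}\|^2\big]\le (C+1)\,\mathbb{E}\big[\|\hat g^{\mathrm{ZO}}(\theta;z)\|^2\big].$$
   Context: The parameter vector $\theta\in\mathbb{R}^d$ is partitioned into $L$ blocks (''layers'') $\theta=(\theta^{(1)},\dots,\theta^{(L)})$ with $\theta^{(l)}\in\mathbb{R}^{d_l}$, $\sum_l d_l=d$; for any $v\in\mathbb{R}^d$, $v^{(l)}$ denotes its $l$-th block. The dense symmetric zeroth-order estimator is $\hat g^{\mathrm{ZO}}(\theta;z)=\frac{\mathcal{L}(\theta+\mu z)-\mathcal{L}(\theta-\mu z)}{2\mu}\,z$ for $z\in\mathbb{R}^d$. $\mathrm{Multinomial}(K,p)$ denotes the counts $N_l$ of the value $l$ among $K$ i.i.d. draws from $p$. Norms are Euclidean; expectations may be $+\infty$. *)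

From HB Require Import structures.
From mathcomp Require Import all_boot all_order all_algebra.
From mathcomp Require Import all_classical all_reals all_analysis.
Set Implicit Arguments. Unset Strict Implicit. Unset Printing Implicit Defensive.
Import Order.TTheory GRing.Theory Num.Theory.
Local Open Scope classical_set_scope.
Local Open Scope ring_scope.

(* Vectors in R^d are d.-tuples (equipped in MathComp-Analysis with the
   product sigma-algebra of the Borel sigma-algebras of the coordinates). *)
Definition vadd (R : realType) (d : nat) (u v : d.-tuple R) : d.-tuple R :=
  [tuple tnth u i + tnth v i | i < d].
Definition vscale (R : realType) (d : nat) (a : R) (v : d.-tuple R) : d.-tuple R :=
  [tuple a * tnth v i | i < d].

Definition sqnorm (R : realType) (d : nat) (v : d.-tuple R) : R :=
  \sum_(i < d) tnth v i ^+ 2.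

Definition gZO (R : realType) (d : nat) (Lf : d.-tuple R -> R) (mu : R)
    (theta z : d.-tuple R) : d.-tuple R :=
  vscale ((Lf (vadd theta (vscale mu z)) - Lf (vadd theta (vscale (- mu) z)))
          / (2 * mu)) z.

(* Clipped AdaLeZO estimator: coordinate i belongs to layer blk i, and its
   block is multiplied by min(1/(K p(l)), C) * N_l. *)
Definition gAda (R : realType) (d L : nat) (blk : 'I_d -> 'I_L)
    (K : nat) (p : 'I_L -> R) (C : R) (Nc : L.-tuple nat)
    (g : d.-tuple R) : d.-tuple R :=
  [tuple Num.min (1 / (K%:R * p (blk i))) C * (tnth Nc (blk i))%:R * tnth g i
   | i < d].

Definition multinomial_pmf (R : realType) (L K : nat) (p : 'I_L -> R)
    (n : L.-tuple nat) : R :=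
  if (\sum_(l < L) tnth n l)%N == K then
    (K`!)%:R / (\prod_(l < L) (tnth n l)`!%:R) * \prod_(l < L) p l ^+ tnth n l
  else 0.

From HB Require Import structures.
From mathcomp Require Import all_boot all_order all_algebra.
From mathcomp Require Import all_classical all_reals all_analysis.
From mathcomp Require Import measurable_realfun.
From mathcomp Require Import ring lra.
Import Order.TTheory GRing.Theory Num.Theory.
Local Open Scope classical_set_scope.
Local Open Scope ring_scope.

(* Since N is independent of z, one may condition on z = v and average over N alone.
   Writing g := ghat(theta; v), coordinate i, in layer l, then contributes
   c_l ^ 2 E[N_l ^ 2] g_i ^ 2 with c_l := min (1 / (K p_l)) C, and the multinomial moment
   E[N_l ^ 2] = K (K - 1) p_l ^ 2 + K p_l together with c_l K p_l <= 1 and c_l <= C bounds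
   this by (1 + C) g_i ^ 2. *)

Fixpoint compositions (L K : nat) {struct L} : seq (L.-tuple nat) :=
  match L return seq (L.-tuple nat) with
  | 0 => if K == 0%N then [:: [tuple]] else [::]
  | L'.+1 => [seq cons_tuple a t | a <- iota 0 K.+1, t <- compositions L' (K - a)]
  end.

Lemma compositions_sum {L K} {n : L.-tuple nat} :
  n \in compositions L K -> (\sum_(l < L) tnth n l)%N = K.
Proof.
elim: L K n => [|L IH] K n; first by case: K => [|K] //=; rewrite big_ord0.
move=> /allpairsPdep[a [t [+ ht ->]]]; rewrite mem_iota add0n ltnS => aK.
rewrite big_ord_recl tnth0; under eq_bigr do rewrite tnthS.
by rewrite (IH _ _ ht) subnKC.
Qed.

Lemma compositions_uniq L K : uniq (compositions L K).
Proof.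
elim: L K => [|L IH] K; first by case: K.
apply: allpairs_uniq_dep => [|a _|[a t] [b u] _ _ /= E]; [exact: iota_uniq|exact: IH|].
have Eab : a = b by move: (congr1 (fun v => tnth v ord0) E); rewrite !tnth0.
subst b; congr existT; apply: val_inj.
exact: (congr1 (fun v => behead (tval v)) E).
Qed.

Lemma big_compositionsS (R : Type) (idx : R) (op : Monoid.com_law idx) L K
    (F : L.+1.-tuple nat -> R) :
  \big[op/idx]_(n <- compositions L.+1 K) F n =
  \big[op/idx]_(0 <= a < K.+1) \big[op/idx]_(t <- compositions L (K - a)) F (cons_tuple a t).
Proof. by rewrite big_allpairs_dep /index_iota subn0. Qed.

Definition multinomial_mass (R : numFieldType) L K (p : 'I_L -> R)
    (n : L.-tuple nat) : R :=
  K`!%:R / (\prod_(l < L) (tnth n l)`!%:R) * \prod_(l < L) p l ^+ tnth n l.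
Arguments multinomial_mass {R L}.

Lemma multinomial_mass_cons (R : numFieldType) L K (p : 'I_L.+1 -> R) a
    (t : L.-tuple nat) : (a <= K)%N ->
  multinomial_mass K p (cons_tuple a t) =
  'C(K, a)%:R * p ord0 ^+ a * multinomial_mass (K - a) (p \o lift ord0) t.
Proof.
move=> aK; rewrite /multinomial_mass !big_ord_recl !tnth0.
under eq_bigr do rewrite tnthS.
under [X in p ord0 ^+ a * X]eq_bigr do rewrite tnthS.
rewrite -(bin_fact aK) !natrM.
have fact_neq0 m : m`!%:R != 0 :> R by rewrite pnatr_eq0 -lt0n fact_gt0.
have prod_neq0 : \prod_(i < L) (tnth t i)`!%:R != 0 :> R.
  by apply/prodf_neq0 => i _; exact: fact_neq0.
move: (fact_neq0 a) (fact_neq0 (K - a)%N) prod_neq0.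
set A := a`!%:R; set B := (K - a)`!%:R; set Q := \prod_(i < L) _.
by move=> A0 B0 Q0; field; rewrite A0 Q0.
Qed.

(* The [j]-th derivative in [x] of the binomial theorem. *)
Lemma exprDn_ffact {R : comNzRingType} (x y : R) j K :
  \sum_(a < K.+1) ('C(K, a) * a ^_ j)%:R * x ^+ (a - j) * y ^+ (K - a)
  = (K ^_ j)%:R * (x + y) ^+ (K - j).
Proof.
elim: j K => [|j IH] K.
  rewrite ffactn0 mul1r subn0 (addrC x y) exprDn.
  by apply: eq_bigr => a _; rewrite ffactn0 muln1 subn0 -mulr_natl; ring.
case: K => [|K]; first by rewrite big_ord1 /= ffact0n muln0 !mul0r.
rewrite big_ord_recl /= ffact0n muln0 !mul0r add0r.
rewrite ffactSS natrM -mulrA -IH big_distrr /=; apply: eq_bigr => i _.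
rewrite /bump /= add1n ffactSS subSS mulnA (mulnC _ i.+1) -mul_bin_diag.
by rewrite !natrM; ring.
Qed.

Lemma sum_multinomial_mass (R : numFieldType) L (p : 'I_L -> R) K :
  \sum_(n <- compositions L K) multinomial_mass K p n = (\sum_(i < L) p i) ^+ K.
Proof.
elim: L p K => [|L IH] p K.
  case: K => [|K] /=; last by rewrite big_nil big_ord0 expr0n.
  by rewrite big_seq1 /multinomial_mass !big_ord0 expr0 fact0 divr1 mulr1.
rewrite big_compositionsS big_ord_recl.
have := exprDn_ffact (p ord0) (\sum_(i < L) p (lift ord0 i)) 0 K.
rewrite ffactn0 mul1r subn0 => <-.
rewrite big_mkord; apply: eq_bigr => a _.
rewrite (eq_big_seq (fun t => 'C(K, a)%:R * p ord0 ^+ a *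
   multinomial_mass (K - a) (p \o lift ord0) t)); last first.
  by move=> t _; rewrite multinomial_mass_cons // -ltnS.
by rewrite -big_distrr /= IH ffactn0 muln1 subn0.
Qed.

Lemma multinomial_ffact_moment (R : numFieldType) L (p : 'I_L -> R) K
    (l : 'I_L) j :
  \sum_(n <- compositions L K) multinomial_mass K p n * (tnth n l ^_ j)%:R =
  (K ^_ j)%:R * p l ^+ j * (\sum_(i < L) p i) ^+ (K - j).
Proof.
elim: L p K l => [|L IH] p K l; first by case: l.
rewrite big_compositionsS big_ord_recl.
set Q := \sum_(i < L) p (lift ord0 i).
have [l' ->|->] := unliftP ord0 l.
- rewrite big_rev_mkord subn0 (addrC (p ord0) Q) mulrAC.
  rewrite -(exprDn_ffact Q (p ord0)) big_distrl /=; apply: eq_bigr => a _.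
  have aK : (a <= K)%N by rewrite -ltnS.
  rewrite subSS (eq_big_seq (fun t => 'C(K, K - a)%:R * p ord0 ^+ (K - a) *
     (multinomial_mass (K - (K - a)) (p \o lift ord0) t * (tnth t l' ^_ j)%:R))); last first.
    by move=> t _; rewrite multinomial_mass_cons ?leq_subr // tnthS mulrA.
  by rewrite -big_distrr /= IH subKn // bin_sub // natrM; ring.
- rewrite mulrAC -(exprDn_ffact (p ord0) Q) big_distrl /= big_mkord.
  apply: eq_bigr => a _; have aK : (a <= K)%N by rewrite -ltnS.
  rewrite (eq_big_seq (fun t => 'C(K, a)%:R * p ord0 ^+ a * (a ^_ j)%:R *
     multinomial_mass (K - a) (p \o lift ord0) t)); last first.
    by move=> t _; rewrite multinomial_mass_cons // tnth0; ring.
  rewrite -big_distrr /= sum_multinomial_mass -/Q.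
  have [ja|aj] := leqP j a; last by rewrite ffact_small // muln0 mulr0 !mul0r.
  by rewrite -(subnK ja) exprD subnK // natrM; ring.
Qed.

Lemma natr_sqr_ffact (R : numFieldType) (m : nat) :
  (m%:R : R) ^+ 2 = (m ^_ 2)%:R + (m ^_ 1)%:R.
Proof.
rewrite -natrX -natrD; congr (_%:R).
by case: m => // m; rewrite ffactSS !ffactn1 -mulnSr.
Qed.

Lemma multinomial_sqr_moment (R : numFieldType) L (p : 'I_L -> R) K (l : 'I_L) :
  \sum_(i < L) p i = 1 ->
  \sum_(n <- compositions L K) multinomial_mass K p n * (tnth n l)%:R ^+ 2 =
  (K ^_ 2)%:R * p l ^+ 2 + K%:R * p l.
Proof.
move=> p1; under eq_bigr do rewrite natr_sqr_ffact mulrDr.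
by rewrite big_split /= !multinomial_ffact_moment p1 !expr1n !mulr1 ffactn1 expr1.
Qed.

(* With [x := K q] and [c := min (1 / x) C] one has [c * x <= 1] and [c <= C], whence
   [c ^+ 2 * K ^_ 2 * q ^+ 2 <= (c * x) ^+ 2 <= 1] and [c ^+ 2 * x <= C]. *)
Lemma clip_sqr_moment_le (R : realFieldType) (K : nat) (q C : R) :
  0 <= q -> 0 <= C ->
  Num.min (1 / (K%:R * q)) C ^+ 2 * ((K ^_ 2)%:R * q ^+ 2 + K%:R * q) <= C + 1.
Proof.
move=> q0 C0.
have x0 : 0 <= K%:R * q by rewrite mulr_ge0 ?ler0n.
have a0 : 0 <= (K ^_ 2)%:R * q ^+ 2 by rewrite mulr_ge0 ?ler0n ?exprn_ge0.
have ax : (K ^_ 2)%:R * q ^+ 2 <= (K%:R * q) ^+ 2.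
  rewrite exprMn -natrX ler_wpM2r ?exprn_ge0 // ler_nat.
  by rewrite ffactnS ffactn1 leq_mul // leq_pred.
set x := K%:R * q in x0 ax *; set a := (K ^_ 2)%:R * q ^+ 2 in a0 ax *.
set c := Num.min _ _.
have c0 : 0 <= c by rewrite le_min C0 divr_ge0.
have cC : c <= C by rewrite ge_min lexx orbT.
have cx : c * x <= 1.
  have [->|xn0] := eqVneq x 0; first by rewrite mulr0.
  by rewrite -ler_pdivlMr ?lt_def ?xn0 // ge_min lexx.
have cx0 : 0 <= c * x by rewrite mulr_ge0.
nra.
Qed.

Lemma sum_multinomial_sqnorm_gAda_le (R : realType) d L (blk : 'I_d -> 'I_L) K
    (p : 'I_L -> R) C (g : d.-tuple R) :
  0 <= C -> (forall l, 0 <= p l) -> \sum_(l < L) p l = 1 ->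
  \sum_(n <- compositions L K) multinomial_mass K p n * sqnorm (gAda blk K p C n g)
  <= (C + 1) * sqnorm g.
Proof.
move=> C0 p0 p1; rewrite /sqnorm big_distrr /=.
under eq_bigr do rewrite big_distrr /=.
rewrite exchange_big /=; apply: ler_sum => i _.
rewrite (eq_bigr (fun n => Num.min (1 / (K%:R * p (blk i))) C ^+ 2 * tnth g i ^+ 2 *
   (multinomial_mass K p n * (tnth n (blk i))%:R ^+ 2))); last first.
  by move=> n _; rewrite tnth_mktuple; ring.
rewrite -big_distrr /= multinomial_sqr_moment // mulrAC.
by rewrite ler_wpM2r ?sqr_ge0 ?clip_sqr_moment_le.
Qed.

Section integral_mrestr.
Local Open Scope ereal_scope.
Context {d} {T : measurableType d} {R : realType}.
Context (m : {measure set T -> \bar R}) {E : set T} (mE : measurable E).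
Import HBNNSimple.

Let integral_mrestr_nnsfun (h : {nnsfun T >-> R}) :
  \int[mrestr m mE]_x (h x)%:E = \int[m]_(x in E) (h x)%:E.
Proof.
under [LHS]eq_integral do rewrite fimfunE -fsumEFin//.
rewrite [LHS]ge0_integral_fsum//; last 2 first.
- by move=> r; exact/measurable_EFinP/measurableT_comp.
- by move=> n x _; rewrite EFinM nnfun_muleindic_ge0.
under [RHS]eq_integral do rewrite fimfunE -fsumEFin//.
rewrite [RHS]ge0_integral_fsum//; last 2 first.
- by move=> r; apply/measurable_EFinP/measurableT_comp => //; exact: measurable_funTS.
- by move=> n x _; rewrite EFinM nnfun_muleindic_ge0.
apply: eq_fsbigr => r _; rewrite !integralZl_indic_nnsfun//.
by rewrite !integral_indic//= /mrestr setIT.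
Qed.

Lemma ge0_integral_mrestr (f : T -> \bar R) :
  measurable_fun setT f -> (forall x, 0 <= f x) ->
  \int[mrestr m mE]_x f x = \int[m]_(x in E) f x.
Proof.
move=> mf f0; pose f_ := nnsfun_approx measurableT mf.
have f_nd x : {homo f_^~ x : a b / (a <= b)%N >-> (a <= b)%R}.
  by move=> a b ab; exact/lefP/nd_nnsfun_approx.
transitivity (limn (fun n => \int[mrestr m mE]_x (f_ n x)%:E)).
  rewrite -monotone_convergence//=.
  - apply: eq_integral => x _; apply/esym/cvg_lim => //=.
    exact: cvg_nnsfun_approx.
  - by move=> n; exact/measurable_EFinP.
  - by move=> n x _; rewrite lee_fin.
  - by move=> x _ a b ab; rewrite lee_fin f_nd.
transitivity (limn (fun n => \int[m]_(x in E) (f_ n x)%:E)).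
  by congr (limn _); apply/funext => n; exact: integral_mrestr_nnsfun.
rewrite -monotone_convergence//=.
- apply: eq_integral => x _; apply/cvg_lim => //=.
  exact: cvg_nnsfun_approx.
- by move=> n; exact/measurable_EFinP/measurable_funTS.
- by move=> n x _; rewrite lee_fin.
- by move=> x _ a b ab; rewrite lee_fin f_nd.
Qed.

End integral_mrestr.

Section independent_event.
Local Open Scope ereal_scope.
Context {d1 d2} {T : measurableType d1} {Y : measurableType d2} {R : realType}.
Context {P : probability T R} {z : T -> Y} {E : set T} {k : R}.
Hypotheses (mz : measurable_fun setT z) (mE : measurable E) (k0 : (0 <= k)%R).
Hypothesis indepE :
  forall A, measurable A -> P (z @^-1` A `&` E) = P (z @^-1` A) * k%:E.

(* Independence says that the law of [z] under [P] restricted to [E] is [k]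
   times the law of [z]. *)
Lemma ge0_integral_indep_event (h : Y -> \bar R) :
  measurable_fun setT h -> (forall y, 0 <= h y) ->
  \int[P]_(x in E) h (z x) = k%:E * \int[P]_x h (z x).
Proof.
move=> mh h0.
rewrite -(ge0_integral_mrestr P mE _ (measurableT_comp mh mz));
  last by move=> x; exact: h0.
have := @ge0_integral_pushforward _ _ _ _ _ z mz (mrestr P mE) setT h measurableT mh (fun y _ => h0 y).
rewrite preimage_setT => <-.
pose zf : {mfun T >-> Y} := HB.pack z (isMeasurableFun.Build _ _ _ _ _ mz).
rewrite (@eq_measure_integral _ _ _ setT (mscale (NngNum k0) (distribution P zf))); last first.
  by move=> A mA _; rewrite /mscale /= /pushforward /mrestr indepE // muleC.
rewrite (@ge0_integral_mscale _ _ _ (distribution P zf) setT measurableT (NngNum k0) h mh);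
  last by move=> y _; exact: h0.
have := @ge0_integral_pushforward _ _ _ _ _ z mz P setT h measurableT mh (fun y _ => h0 y).
by rewrite preimage_setT => ->.
Qed.

End independent_event.

Lemma measurable_fun_fiberwise {d1 d2} {T : measurableType d1}
    {Y : measurableType d2} {R : realType} {I : countType}
    {z : T -> Y} {N : T -> I} {F : I -> Y -> R} :
  measurable_fun setT z -> (forall n, measurable [set x | N x = n]) ->
  (forall n, measurable_fun setT (F n)) ->
  measurable_fun setT (fun x => F (N x) (z x)).
Proof.
move=> mz mN mF _ B mB; rewrite setTI.
have -> : (fun x => F (N x) (z x)) @^-1` B =
    \bigcup_n ([set x | N x = n] `&` (F n \o z) @^-1` B).
  apply/seteqP; split => [x Bx|x [n _ [/= <- //]]].
  by exists (N x).
apply: countable_bigcupT_measurable => [|n]; first exact: countableP.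
by rewrite -(setTI (_ @^-1` B)); apply: measurableI; [exact: mN|exact: measurableT_comp].
Qed.

Section independent_discrete.
Local Open Scope ereal_scope.
Context {d1 d2} {T : measurableType d1} {Y : measurableType d2} {R : realType}
  {I : countType}.
Context {P : probability T R} {z : T -> Y} {N : T -> I} {w : I -> R} {S : seq I}.
Hypotheses (mz : measurable_fun setT z)
  (mN : forall n, measurable [set x | N x = n]).
Hypothesis PN : forall n, P [set x | N x = n] = (w n)%:E.
Hypotheses (uniqS : uniq S) (sumS : (\sum_(n <- S) w n)%R = 1%R).
Hypothesis indepN : forall (A : set Y) n, measurable A ->
  P (z @^-1` A `&` [set x | N x = n]) = P (z @^-1` A) * P [set x | N x = n].

Let E n := [set x | N x = n].
Let ES := \big[setU/set0]_(n <- S) E n.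

Let w_ge0 n : (0 <= w n)%R.
Proof. by rewrite -lee_fin -PN; exact: measure_ge0. Qed.

Let mES : measurable ES.
Proof. by apply: bigsetU_measurable => n _; exact: mN. Qed.

Let trivIset_E : trivIset [set` S] E.
Proof. by move=> i j _ _ [x [/= hi hj]]; rewrite -hi -hj. Qed.

Let P_setC_ES : P (~` ES) = 0.
Proof.
have PE n : \int[P]_(x in E n) 1 = (w n)%:E.
  by rewrite integral_cst ?mul1e; [exact: PN | exact: mN].
rewrite probability_setC // -[P ES]mul1e -integral_cst //.
rewrite ge0_integral_bigsetU // (eq_bigr _ (fun n _ => PE n)).
by rewrite sumEFin sumS subee.
Qed.

Let integral_ES (f : T -> \bar R) :
  measurable_fun setT f -> (forall x, 0 <= f x) ->
  \int[P]_x f x = \int[P]_(x in ES) f x.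
Proof.
move=> mf f0; rewrite -(setUv ES) ge0_integral_setU //; last 3 first.
- exact: measurableC mES.
- by rewrite (setUv ES).
- by rewrite disj_set2E setICr.
by rewrite (null_set_integral (measurableC mES)) ?adde0 //; exact: measurable_funTS.
Qed.

Lemma ge0_integral_indep_mixture (F : I -> Y -> R) :
  (forall n, measurable_fun setT (F n)) -> (forall n y, (0 <= F n y)%R) ->
  \int[P]_x (F (N x) (z x))%:E = \int[P]_x (\sum_(n <- S) w n * F n (z x))%:E.
Proof.
move=> mF F0.
have mFnz n : measurable_fun setT (fun x => (F n (z x))%:E).
  exact/measurable_EFinP/measurableT_comp.
rewrite integral_ES; last 2 first.
- exact/measurable_EFinP/(measurable_fun_fiberwise mz mN mF).
- by move=> x; rewrite lee_fin.
rewrite ge0_integral_bigsetU //; last 2 first.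
- apply/measurable_funTS/measurable_EFinP.
  exact: (measurable_fun_fiberwise mz mN mF).
- by move=> x _; rewrite lee_fin.
under [RHS]eq_integral do rewrite -sumEFin.
rewrite ge0_integral_sum //; last 2 first.
- by move=> n; under eq_fun do rewrite EFinM; exact: emeasurable_funM.
- by move=> n x _; rewrite lee_fin mulr_ge0.
apply: eq_bigr => n _.
rewrite (eq_integral (fun x => (F n (z x))%:E)); last by move=> x; rewrite inE => ->.
rewrite (ge0_integral_indep_event mz (mN n) (w_ge0 n) _ (fun y => (F n y)%:E)) //.
- under [RHS]eq_integral do rewrite EFinM.
  by rewrite ge0_integralZl ?lee_fin // => x _; rewrite lee_fin.
- by move=> A mA; rewrite -PN; exact: indepN.
- exact/measurable_EFinP.
- by move=> y; rewrite lee_fin.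
Qed.

End independent_discrete.

Lemma multinomial_pmfE {R : realType} {L K} (p : 'I_L -> R) {n} :
  n \in compositions L K -> multinomial_pmf K p n = multinomial_mass K p n.
Proof. by move=> nK; rewrite /multinomial_pmf (compositions_sum nK) eqxx. Qed.

Lemma sqnorm_ge0 {R : realType} {d} (v : d.-tuple R) : 0 <= sqnorm v.
Proof. by apply: sumr_ge0 => i _; exact: sqr_ge0. Qed.

Lemma measurable_sqnorm {R : realType} {d} : measurable_fun setT (@sqnorm R d).
Proof.
by apply: measurable_sum => i; apply: measurable_funX; exact: measurable_tnth.
Qed.

Lemma measurable_gZO {R : realType} {d} (Lf : d.-tuple R -> R) mu theta :
  measurable_fun setT Lf -> measurable_fun setT (gZO Lf mu theta).
Proof.
move=> mLf.
have mshift a : measurable_fun setT (fun v : d.-tuple R => vadd theta (vscale a v)).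
  apply/measurable_fun_tnthP => i.
  rewrite (_ : _ \o _ = fun v => tnth theta i + a * tnth v i); last first.
    by apply/funext => v; rewrite /= !tnth_mktuple.
  by apply: measurable_funD => //; apply: measurable_funM => //; exact: measurable_tnth.
apply/measurable_fun_tnthP => i.
rewrite (_ : _ \o _ = fun v => (Lf (vadd theta (vscale mu v)) -
    Lf (vadd theta (vscale (- mu) v))) / (2 * mu) * tnth v i); last first.
  by apply/funext => v; rewrite /= tnth_mktuple.
apply: measurable_funM; last exact: measurable_tnth.
by apply: measurable_funM => //; apply: measurable_funB; exact: measurableT_comp.
Qed.

Lemma measurable_gAda {R : realType} {d L} (blk : 'I_d -> 'I_L) K (p : 'I_L -> R) C n :
  measurable_fun setT (gAda blk K p C n).
Proof.
apply/measurable_fun_tnthP => i.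
rewrite (_ : _ \o _ = fun g => Num.min (1 / (K%:R * p (blk i))) C *
    (tnth n (blk i))%:R * tnth g i); last by apply/funext => g; rewrite /= tnth_mktuple.
by apply: measurable_funM => //; exact: measurable_tnth.
Qed.

Theorem mainTheorem4 (R : realType) (d L : nat) (blk : 'I_d -> 'I_L)
    (Lf : d.-tuple R -> R) (mu : R) (theta : d.-tuple R) (K : nat) (C : R)
    (p : 'I_L -> R)
    (dT : measure_display) (T : measurableType dT) (P : probability T R)
    (z : T -> d.-tuple R) (Nc : T -> L.-tuple nat) :
  measurable_fun setT Lf ->
  0 < mu -> (1 <= K)%N -> 0 < C ->
  (forall l, 0 < p l) -> \sum_(l < L) p l = 1 ->
  (* z is a random vector with law N(0, I_d) *)
  measurable_fun setT z ->
  (forall B : 'I_d -> set R, (forall i, measurable (B i)) ->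
     P (z @^-1` [set v | forall i, B i (tnth v i)])
     = (\prod_(i < d) normal_prob 0 1 (B i))%E) ->
  (* (N_1, ..., N_L) ~ Multinomial(K, p) *)
  (forall n : L.-tuple nat, measurable [set x | Nc x = n]) ->
  (forall n : L.-tuple nat,
     P [set x | Nc x = n] = (multinomial_pmf K p n)%:E) ->
  (* z and N are independent *)
  (forall (A : set (d.-tuple R)) (n : L.-tuple nat), measurable A ->
     P (z @^-1` A `&` [set x | Nc x = n])
     = (P (z @^-1` A) * P [set x | Nc x = n])%E) ->
  (\int[P]_x (sqnorm (gAda blk K p C (Nc x) (gZO Lf mu theta (z x))))%:E
   <= (C + 1)%:E * \int[P]_x (sqnorm (gZO Lf mu theta (z x)))%:E)%E.
Proof.
move=> mLf _ _ C0 p0 p1 mz _ mNc PNc indep.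
have mG := measurable_gZO Lf mu theta mLf.
pose F n v := sqnorm (gAda blk K p C n (gZO Lf mu theta v)).
have mF n : measurable_fun setT (F n).
  exact: measurableT_comp measurable_sqnorm (measurableT_comp (measurable_gAda _ _ _ _ _) mG).
have sum_pmf : \sum_(n <- compositions L K) multinomial_pmf K p n = 1.
  by rewrite (eq_big_seq _ (fun n nK => multinomial_pmfE p nK)) sum_multinomial_mass p1 expr1n.
rewrite (ge0_integral_indep_mixture mz mNc PNc (compositions_uniq L K) sum_pmf indep F mF
  (fun n v => sqnorm_ge0 _)).
rewrite -ge0_integralZl //; last 3 first.
- exact/measurable_EFinP/(measurableT_comp measurable_sqnorm (measurableT_comp mG mz)).
- by move=> x _; rewrite lee_fin sqnorm_ge0.
- by rewrite lee_fin addr_ge0 // ltW.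
have pmf_ge0 n : 0 <= multinomial_pmf K p n by rewrite -lee_fin -PNc; exact: measure_ge0.
apply: ge0_le_integral => //.
- move=> x _; rewrite lee_fin sumr_ge0 // => n _.
  exact: mulr_ge0 (pmf_ge0 n) (sqnorm_ge0 _).
- apply/measurable_EFinP/measurable_sum => n.
  exact: measurable_funM (measurableT_comp (mF n) mz).
- apply: emeasurable_funM => //.
  exact/measurable_EFinP/(measurableT_comp measurable_sqnorm (measurableT_comp mG mz)).
move=> x _; rewrite -EFinM lee_fin.
rewrite (eq_big_seq (fun n => multinomial_mass K p n * F n (z x))); last first.
  by move=> n nK; rewrite multinomial_pmfE.
exact: sum_multinomial_sqnorm_gAda_le (ltW C0) (fun l => ltW (p0 l)) p1.
Qed.
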